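(* The natural map from the monoid $B_n^+$ to $B_n$ is injective: if two positive words in the band generators represent the same element of $B_n$, then they are positively equivalent.
   Context: $B_n$ is the $n$-string braid group with band generators $a_{ts}$ ($n\ge t>s\ge1$), where $a_{ts}=(\sigma_{t-1}\cdots\sigma_{s+1})\sigma_s(\sigma_{s+1}^{-1}\cdots\sigma_{t-1}^{-1})$. The band relations are: (R1) $a_{ts}a_{rq}=a_{rq}a_{ts}$ if $(t-r)(t-q)(s-r)(s-q)>0$; (R2) $a_{ts}a_{sr}=a_{tr}a_{ts}=a_{sr}a_{tr}$ for $n\ge t>s>r\ge1$. A positive word is a word in positive powers of the $a_{ts}$. Two positive words are positively equivalent if one can be transformed into the other by a finite sequence of single direct applications of relations (R1), (R2) to subwords. $B_n^+$ is the monoid with generators $a_{ts}$ and relations (R1), (R2), i.e. positive words modulo positive equivalence. *)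

From mathcomp Require Import all_boot all_order all_algebra.
From Stdlib Require Export Relation_Operators.
Set Implicit Arguments. Unset Strict Implicit. Unset Printing Implicit Defensive.
Import Order.TTheory GRing.Theory Num.Theory.

(* A letter (i, true) is sigma_i, (i, false) is sigma_i^{-1}. *)
Definition aword := seq (nat * bool).

Inductive artin_rel (n : nat) : aword -> aword -> Prop :=
| ar_cancel : forall i b, 1 <= i -> i < n ->
    artin_rel n [:: (i, b); (i, ~~ b)] [::]
| ar_comm : forall i j, 1 <= i -> i.+1 < j -> j < n ->
    artin_rel n [:: (i, true); (j, true)] [:: (j, true); (i, true)]
| ar_braid : forall i, 1 <= i -> i.+1 < n ->
    artin_rel n [:: (i, true); (i.+1, true); (i, true)]
                [:: (i.+1, true); (i, true); (i.+1, true)].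

Inductive artin_step (n : nat) : aword -> aword -> Prop :=
| as_step : forall p q l r, artin_rel n l r ->
    artin_step n (p ++ l ++ q) (p ++ r ++ q).

Definition braid_eq (n : nat) : aword -> aword -> Prop :=
  clos_refl_sym_trans aword (artin_step n).

(* a_{ts} = (sigma_{t-1} ... sigma_{s+1}) sigma_s (sigma_{s+1}^{-1} ... sigma_{t-1}^{-1}) *)
Definition band_artin (t s : nat) : aword :=
  [seq (k, true) | k <- rev (iota s.+1 (t.-1 - s))] ++ [:: (s, true)] ++
  [seq (k, false) | k <- iota s.+1 (t.-1 - s)].

(* A positive word in the band generators: the pair (t, s) stands for a_{ts}. *)
Definition bword := seq (nat * nat).

Definition valid_band (n : nat) (g : nat * nat) : bool :=
  (1 <= g.2) && (g.2 < g.1) && (g.1 <= n).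

Definition valid_bword (n : nat) (w : bword) : bool := all (valid_band n) w.

Definition bword_to_artin (w : bword) : aword := flatten [seq band_artin g.1 g.2 | g <- w].

Inductive band_rel (n : nat) : bword -> bword -> Prop :=
| br_R1 : forall t s r q,
    valid_band n (t, s) -> valid_band n (r, q) ->
    ((0 : int) < (t%:Z - r%:Z) * (t%:Z - q%:Z) * (s%:Z - r%:Z) * (s%:Z - q%:Z))%R ->
    band_rel n [:: (t, s); (r, q)] [:: (r, q); (t, s)]
| br_R2a : forall t s r, 1 <= r -> r < s -> s < t -> t <= n ->
    band_rel n [:: (t, s); (s, r)] [:: (t, r); (t, s)]
| br_R2b : forall t s r, 1 <= r -> r < s -> s < t -> t <= n ->
    band_rel n [:: (t, r); (t, s)] [:: (s, r); (t, r)]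
| br_R2c : forall t s r, 1 <= r -> r < s -> s < t -> t <= n ->
    band_rel n [:: (t, s); (s, r)] [:: (s, r); (t, r)].

Inductive band_step (n : nat) : bword -> bword -> Prop :=
| bs_step : forall p q l r, band_rel n l r ->
    band_step n (p ++ l ++ q) (p ++ r ++ q).

Definition pos_equiv (n : nat) : bword -> bword -> Prop :=
  clos_refl_sym_trans bword (band_step n).

(* Following Birman, Ko and Lee, two distinct band generators a, b have a
   least common right multiple, spelled a (bcompl a b) = b (bcompl b a), and
   these complement relations generate positive equivalence.  Subword reversing
   and the cube condition on triples of generators make B_n^+ left
   cancellative; a triple involves at most six strands, so the cube condition
   is checked by computation on six strands and transported to every n by an
   increasing relabelling.  Conjugation by delta = a_(n,n-1) ... a_(2,1)
   permutes the generators with period n, so delta^n is central, and every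
   sigma_i divides delta^n.  Hence each braid word is a fraction
   P (delta^n)^-k with P positive, compatibly with the braid relations, and
   two positive words equal in B_n become positively equivalent after
   multiplication by a power of delta^n, which then cancels. *)

From mathcomp Require Import all_boot all_order all_algebra.
From mathcomp Require Import zify.
From Stdlib Require Import Operators_Properties.
Set Implicit Arguments. Unset Strict Implicit. Unset Printing Implicit Defensive.
Import GRing.Theory Num.Theory.

(* [a :: bcompl a b] and [b :: bcompl b a] both spell the least common right
   multiple of [a] and [b] in B_n^+. *)
Definition bcompl (a b : nat * nat) : bword :=
  let: (t, s) := a in let: (r, q) := b in
  if (t == r) && (s == q) then [::]
  else if s == r then [:: b]
  else if q == t then [:: (r, s)]
  else if t == r then (if q < s then [:: (s, q)] else [:: b])
  else if s == q then (if r < t then [:: (t, r)] else [:: b])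
  else if [&& r < t, s < r & q < s] then [:: (t, r); (s, q)]
  else if [&& t < r, q < t & s < q] then [:: (r, s); (t, q)]
  else [:: b].

Ltac bcompl_cases := rewrite /bcompl; repeat (case: ifP => /=); move=> *; try lia.

Lemma size_bcomplC a b : size (bcompl a b) = size (bcompl b a).
Proof. case: a b => t s [r q]; bcompl_cases. Qed.

Lemma bcompl_valid n a b :
  valid_band n a -> valid_band n b -> valid_bword n (bcompl a b).
Proof. case: a b => t s [r q]; rewrite /valid_bword /valid_band /bcompl /=; bcompl_cases. Qed.

Lemma valid_bword_cat n u v :
  valid_bword n (u ++ v) = valid_bword n u && valid_bword n v.
Proof. exact: all_cat. Qed.

Lemma bcomplxx a : bcompl a a = [::].
Proof. by case: a => t s; rewrite /bcompl !eqxx. Qed.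

Definition cstep n (u v : bword) : Prop :=
  exists p q a b, [/\ a != b, valid_band n a, valid_band n b,
     u = p ++ a :: bcompl a b ++ q & v = p ++ b :: bcompl b a ++ q].

Definition cequiv n := clos_refl_trans bword (cstep n).

Lemma cstep_sym n u v : cstep n u v -> cstep n v u.
Proof.
by move=> [p [q [a [b [ab va vb -> ->]]]]]; exists p, q, b, a; rewrite eq_sym.
Qed.

Lemma cequiv_refl n u : cequiv n u u.
Proof. exact: rt_refl. Qed.

Lemma cequiv_trans n u v w : cequiv n u v -> cequiv n v w -> cequiv n u w.
Proof. exact: rt_trans. Qed.

Lemma cequiv_sym n u v : cequiv n u v -> cequiv n v u.
Proof.
elim=> [x y /cstep_sym | x | x y z _ H1 _ H2].
- exact: rt_step.
- exact: rt_refl.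
- exact: rt_trans H2 H1.
Qed.

Lemma cequiv_compl n a b : a != b -> valid_band n a -> valid_band n b ->
  cequiv n (a :: bcompl a b) (b :: bcompl b a).
Proof. by move=> ab va vb; apply: rt_step; exists [::], [::], a, b; rewrite !cats0. Qed.

Lemma cequiv_ctx n P Q u v : cequiv n u v -> cequiv n (P ++ u ++ Q) (P ++ v ++ Q).
Proof.
elim=> [x y [p [q [a [b [ab va vb -> ->]]]]] | x | x y z _ H1 _ H2].
- apply: rt_step; exists (P ++ p), (q ++ Q), a, b.
  by split=> //; rewrite -!catA /= -!catA.
- exact: rt_refl.
- exact: rt_trans H2.
Qed.

Lemma cequiv_cat n u u' v v' :
  cequiv n u u' -> cequiv n v v' -> cequiv n (u ++ v) (u' ++ v').
Proof.
move=> Hu Hv; apply: (@cequiv_trans _ _ (u' ++ v)).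
  by have := cequiv_ctx [::] v Hu.
by have := cequiv_ctx u' [::] Hv; rewrite !cats0.
Qed.

Lemma cequiv_catl n P u v : cequiv n u v -> cequiv n (P ++ u) (P ++ v).
Proof. exact/cequiv_cat/cequiv_refl. Qed.

Lemma cequiv_catr n Q u v : cequiv n u v -> cequiv n (u ++ Q) (v ++ Q).
Proof. by move=> H; apply: cequiv_cat H (cequiv_refl _ _). Qed.

Lemma cequiv_cons n x u v : cequiv n u v -> cequiv n (x :: u) (x :: v).
Proof. exact: (@cequiv_catl n [:: x]). Qed.

Lemma cequiv_size n u v : cequiv n u v -> size u = size v.
Proof.
elim=> [x y [p [q [a [b [_ _ _ -> ->]]]]] | // | x y z _ -> _ -> //].
by rewrite !size_cat /= !size_cat size_bcomplC.
Qed.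

(* Subword reversing: fill the grid of complements spanned by [P] and [Q];
   [None] when the fuel runs out. *)
Fixpoint reverse (fuel : nat) (P Q : bword) : option (bword * bword) :=
  if fuel is fu.+1 then
    match P, Q with
    | [::], _ => Some (Q, [::])
    | _, [::] => Some ([::], P)
    | a :: P1, b :: Q1 =>
      if a == b then reverse fu P1 Q1 else
      match reverse fu (bcompl b a) Q1 with
      | Some (A, B) => match reverse fu P1 (bcompl a b ++ A) with
                       | Some (C, D) => Some (C, B ++ D) | None => None end
      | None => None end
    end
  else None.

Lemma reverse_cequiv n fu P Q R S : reverse fu P Q = Some (R, S) ->
  valid_bword n P -> valid_bword n Q ->
  [/\ valid_bword n R, valid_bword n S & cequiv n (P ++ R) (Q ++ S)].
Proof.
elim: fu P Q R S => // fu IH [|a P1] [|b Q1] R S /=;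
  try by case=> <- <- vP vQ; split; rewrite ?cats0 //; apply: cequiv_refl.
move=> + /andP[va vP] /andP[vb vQ].
case: eqP => [<- /IH /(_ vP vQ) [vR vS H] | /eqP ab].
  by split=> //; apply: cequiv_cons.
case E1: (reverse fu (bcompl b a) Q1) => [[A B]|//].
case E2: (reverse fu P1 (bcompl a b ++ A)) => [[C D]|//] [<- <-].
have [vA vB H1] := IH _ _ _ _ E1 (bcompl_valid vb va) vQ.
have vabA : valid_bword n (bcompl a b ++ A) by rewrite valid_bword_cat bcompl_valid.
have [vC vD H2] := IH _ _ _ _ E2 vP vabA.
split=> //; first by rewrite valid_bword_cat vB.
apply: (@cequiv_trans _ _ (a :: bcompl a b ++ A ++ D)).
  by apply: cequiv_cons; rewrite catA.
apply: (@cequiv_trans _ _ (b :: bcompl b a ++ A ++ D)).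
  by rewrite !catA -!cat_cons; do 2 apply: cequiv_catr; apply: cequiv_compl.
by apply: cequiv_cons; rewrite !catA; apply: cequiv_catr.
Qed.

(* Strengthened induction hypothesis for left cancellativity. *)
Definition head_split n x y (U V : bword) :=
  (x = y /\ cequiv n U V) \/
  [/\ x <> y, valid_band n x, valid_band n y &
      exists W, cequiv n U (bcompl x y ++ W) /\ cequiv n V (bcompl y x ++ W)].

Definition head_split_below n L := forall x y U V, size U < L ->
  cequiv n (x :: U) (y :: V) -> head_split n x y U V.

Lemma reverse_complete n L : head_split_below n L -> forall fu P Q R S W1 W2,
  reverse fu P Q = Some (R, S) -> cequiv n (P ++ W1) (Q ++ W2) ->
  size (P ++ W1) <= L ->
  exists W, cequiv n W1 (R ++ W) /\ cequiv n W2 (S ++ W).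
Proof.
move=> HL; elim=> // fu IH [|a P1] [|b Q1] R S W1 W2 /=.
- by case=> <- <- H _; exists W2; split=> //; apply: cequiv_refl.
- by case=> <- <- H _; exists W2; split=> //; apply: cequiv_refl.
- by case=> <- <- H _; exists W1; split; [apply: cequiv_refl | apply: cequiv_sym].
move=> + H Hs.
have [[ab H'] | [ab va vb [W [HW1 HW2]]]] := HL _ _ _ _ Hs H.
  by rewrite ab eqxx => E; apply: IH E H' (ltnW Hs).
move/eqP/negPf: ab => ->.
case E1: (reverse fu (bcompl b a) Q1) => [[A B]|//].
case E2: (reverse fu P1 (bcompl a b ++ A)) => [[C D]|//] [<- <-].
have Hs2 : size (bcompl b a ++ W) <= L.
  by rewrite -(cequiv_size HW2); have := cequiv_size H; rewrite /= => [[<-]]; apply: ltnW.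
have [W' [HA HB]] := IH _ _ _ _ _ _ E1 (cequiv_sym HW2) Hs2.
have H2 : cequiv n (P1 ++ W1) ((bcompl a b ++ A) ++ W').
  by apply: cequiv_trans HW1 _; rewrite -catA; apply: cequiv_catl.
have [W'' [HC HD]] := IH _ _ _ _ _ _ E2 H2 (ltnW Hs).
exists W''; split=> //.
by apply: cequiv_trans HB _; rewrite -catA; apply: cequiv_catl.
Qed.

(* The cube condition on three generators; the fuel 40 is ample for the check
   on six strands below. *)
Definition cube_ok x y z : bool :=
  match reverse 40 (bcompl z x) (bcompl z y) with
  | Some (A, B) => match reverse 40 (bcompl x y) (bcompl x z ++ A) with
     | Some (T, [::]) => reverse 40 (bcompl y x ++ T) (bcompl y z ++ B) == Some ([::], [::])
     | _ => false end
  | None => false end.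

Lemma cube_okP x y z : cube_ok x y z ->
  exists A B T,
  [/\ reverse 40 (bcompl z x) (bcompl z y) = Some (A, B),
      reverse 40 (bcompl x y) (bcompl x z ++ A) = Some (T, [::]) &
      reverse 40 (bcompl y x ++ T) (bcompl y z ++ B) = Some ([::], [::])].
Proof.
rewrite /cube_ok; case E1: (reverse 40 _ _) => [[A B]|//].
case E2: (reverse 40 _ _) => [[T [|//]]|//] /eqP E3.
by exists A, B, T.
Qed.

Definition cube_cond n := forall x y z,
  valid_band n x -> valid_band n y -> valid_band n z -> z != x -> z != y ->
  cube_ok x y z.

Lemma cstep_cons_inv n z y Z V : cstep n (z :: Z) (y :: V) ->
  (z = y /\ cstep n Z V) \/
  exists q, [/\ z != y, valid_band n z, valid_band n y,
                Z = bcompl z y ++ q & V = bcompl y z ++ q].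
Proof.
move=> [[|c p] [q [a [b [ab va vb /= [-> ->] [-> ->]]]]]].
  by right; exists q.
by left; split=> //; exists p, q, a, b.
Qed.

Section LeftCancellation.
Variable n : nat.
Hypothesis cube : cube_cond n.

Lemma head_split_cstep L x a b U q : head_split_below n L ->
  size (bcompl a b ++ q) <= L -> a != b -> valid_band n a -> valid_band n b ->
  head_split n x a U (bcompl a b ++ q) -> head_split n x b U (bcompl b a ++ q).
Proof.
move=> HL Hs ab va vb; rewrite /head_split => -[[-> HU] | [xa vx _ [W [HUW HW]]]].
  right; split=> //; first exact/eqP.
  by exists q; split=> //; apply: cequiv_refl.
have [A [B [T [C1 C2 C3]]]] := cube_okP (cube vx vb va (introN eqP (nesym xa)) ab).
have Hs' : size (bcompl a x ++ W) <= L by rewrite -(cequiv_size HW).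
have [Ws [HWs Hq]] := reverse_complete HL C1 (cequiv_sym HW) Hs'.
have [vA vB G1] := reverse_cequiv C1 (bcompl_valid va vx) (bcompl_valid va vb).
have vxaA : valid_bword n (bcompl x a ++ A) by rewrite valid_bword_cat bcompl_valid.
have [vT _ G2] := reverse_cequiv C2 (bcompl_valid vx vb) vxaA.
have vbxT : valid_bword n (bcompl b x ++ T) by rewrite valid_bword_cat bcompl_valid.
have vbaB : valid_bword n (bcompl b a ++ B) by rewrite valid_bword_cat bcompl_valid.
have [_ _ G3] := reverse_cequiv C3 vbxT vbaB.
rewrite cats0 in G2; rewrite !cats0 in G3.
have HUT : cequiv n U (bcompl x b ++ T ++ Ws).
  apply: cequiv_trans HUW _; apply: (@cequiv_trans _ _ (bcompl x a ++ A ++ Ws)).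
    exact: cequiv_catl.
  by rewrite !catA; apply: cequiv_catr; apply: cequiv_sym.
have HqT : cequiv n (bcompl b a ++ q) (bcompl b x ++ T ++ Ws).
  apply: (@cequiv_trans _ _ (bcompl b a ++ B ++ Ws)); first exact: cequiv_catl.
  by rewrite !catA; apply: cequiv_catr; apply: cequiv_sym.
have [xb | xb] := eqVneq x b.
  subst b; left; split=> //; rewrite bcomplxx in HUT HqT.
  exact: cequiv_trans HUT (cequiv_sym HqT).
by right; split=> //; [apply/eqP | exists (T ++ Ws)].
Qed.

Lemma head_split_all L : head_split_below n L.
Proof.
elim: L => [//|L HL] x y U V HU H.
move: (clos_rt_rtn1 _ _ _ _ H); clear H.
suff: forall w, clos_refl_trans_n1 _ (cstep n) (x :: U) w ->
    forall y V, w = y :: V -> head_split n x y U V.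
  by move=> Hw /Hw; apply.
move=> w; elim=> [|w1 w2 Hst Hc IH] {}y {}V Ew.
  by case: Ew => <- <-; left; split=> //; apply: cequiv_refl.
subst w2; case: w1 Hst Hc IH => [|z Z] Hst Hc IH.
  by have := cequiv_size (clos_rtn1_rt _ _ _ _ Hc).
have HsZ : size Z = size U.
  by have [] := cequiv_size (clos_rtn1_rt _ _ _ _ Hc).
have {}IH := IH z Z erefl.
case: (cstep_cons_inv Hst) => [[<- HZV] | [q [zy vz vy EZ EV]]].
  case: IH => [[xz HUZ] | [xz vx vz [W [HUW HZW]]]].
    by left; split=> //; apply: cequiv_trans HUZ (rt_step _ _ _ _ HZV).
  right; split=> //; exists W; split=> //.
  exact: cequiv_trans (cequiv_sym (rt_step _ _ _ _ HZV)) HZW.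
subst Z V; apply: head_split_cstep HL _ zy vz vy IH.
by rewrite HsZ.
Qed.

Lemma cequiv_cons_cancel x U V : cequiv n (x :: U) (x :: V) -> cequiv n U V.
Proof. by case/(head_split_all (ltnSn (size U))) => [[] | []]. Qed.

Lemma cequiv_cat_cancel P U V : cequiv n (P ++ U) (P ++ V) -> cequiv n U V.
Proof. by elim: P => //= x P IH /cequiv_cons_cancel. Qed.

End LeftCancellation.

Section ReverseMap.
Variable g : nat * nat -> nat * nat.
Hypothesis g_inj : injective g.
Hypothesis bcompl_g : forall a b, bcompl (g a) (g b) = map g (bcompl a b).

Lemma reverse_map fu P Q : reverse fu (map g P) (map g Q) =
  omap (fun p => (map g p.1, map g p.2)) (reverse fu P Q).
Proof.
elim: fu P Q => // fu IH [|a P1] [|b Q1] //=.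
rewrite (inj_eq g_inj); case: eqP => // _.
rewrite bcompl_g IH; case: (reverse fu (bcompl b a) Q1) => [[A B]|//] /=.
rewrite bcompl_g -map_cat IH.
by case: (reverse fu P1 (bcompl a b ++ A)) => [[C D]|//] /=; rewrite map_cat.
Qed.

Lemma cube_ok_map x y z : cube_ok (g x) (g y) (g z) = cube_ok x y z.
Proof.
rewrite /cube_ok !bcompl_g reverse_map.
case: (reverse 40 _ _) => [[A B]|//]; cbn [omap obind oapp fst snd].
rewrite -map_cat reverse_map.
case: (reverse 40 _ _) => [[T [|? ?]]|//]; cbn [omap obind oapp fst snd map] => //.
rewrite -!map_cat reverse_map.
by case: (reverse 40 _ _) => [[[|? ?] [|? ?]]|].
Qed.

End ReverseMap.

Definition bands6 : bword :=
  [seq (t, s) | t <- iota 1 6, s <- [seq s <- iota 1 6 | s < t]].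

Lemma cube_ok_bands6 : all (fun x => all (fun y => all (fun z =>
  (z == x) || (z == y) || cube_ok x y z) bands6) bands6) bands6.
Proof. by vm_compute. Qed.

Lemma mem_bands6 t s : 0 < s -> s < t -> t <= 6 -> (t, s) \in bands6.
Proof.
move=> s0 st t6; apply/flatten_mapP; exists t; first by rewrite mem_iota; lia.
by apply/mapP; exists s; rewrite // mem_filter st mem_iota; lia.
Qed.

(* [bcompl] only compares coordinates, so it commutes with any strictly
   increasing relabelling of the strands. *)
Section Relabel.
Variable h : nat -> nat.
Hypothesis h_mono : {mono h : i j / i <= j}.

Definition relabel (a : nat * nat) := (h a.1, h a.2).

Lemma relabel_inj : injective relabel.
Proof. by move=> [a1 a2] [b1 b2] [/(incn_inj h_mono) -> /(incn_inj h_mono) ->]. Qed.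

Lemma bcompl_relabel a b : bcompl (relabel a) (relabel b) = map relabel (bcompl a b).
Proof.
have h_eq i j : (h i == h j) = (i == j) by rewrite !eqn_leq !h_mono.
have h_lt i j : (h i < h j) = (i < j) by rewrite !ltnNge h_mono.
case: a b => t s [r q]; rewrite /bcompl /relabel /= !h_eq !h_lt.
by rewrite !(fun_if (map relabel)).
Qed.

End Relabel.

Section Spread.
Variable s : seq nat.
Hypothesis s_sorted : sorted ltn (0 :: s).

Definition spread i := nth (last 0 s + (i - size s)) (0 :: s) i.

Lemma spreadS i : spread i < spread i.+1.
Proof.
rewrite /spread; case: (ltngtP i (size s)) => [i_lt | i_gt | ->].
- have lt_i1 : i.+1 < size (0 :: s) by [].
  rewrite (set_nth_default 0 _ lt_i1) (set_nth_default 0 _ (ltnW lt_i1)).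
  by apply: (sorted_ltn_nth ltn_trans 0 s_sorted); rewrite ?inE // ltnW.
- by rewrite !nth_default /=; lia.
- by rewrite (nth_default _ (leqnn _)) -[size s]/(size (0 :: s)).-1 nth_last /=; lia.
Qed.

Lemma spread_mono : {mono spread : i j / i <= j}.
Proof. exact: Order.TotalTheory.le_mono (homo_ltn ltn_trans spreadS). Qed.

Lemma spread_index p : p \in s -> spread (index p s).+1 = p.
Proof. by move=> ps; rewrite /spread /= nth_index. Qed.

End Spread.

Lemma relabel_bands6 s t u : sorted ltn (0 :: s) -> size s <= 6 ->
  t \in s -> u \in s -> u < t ->
  exists2 w0, w0 \in bands6 & relabel (spread s) w0 = (t, u).
Proof.
move=> s_sorted size_s ts us ut; exists ((index t s).+1, (index u s).+1).
  apply: mem_bands6 => //; last by apply: leq_trans size_s; rewrite index_mem.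
  by rewrite ltnNge -(spread_mono s_sorted) !spread_index // -ltnNge.
by rewrite /relabel /= !spread_index.
Qed.

Lemma cube_cond_holds n : cube_cond n.
Proof.
move=> x y z vx vy vz zx zy.
pose E := [:: x.1; x.2; y.1; y.2; z.1; z.2].
pose s := sort leq (undup E).
have mem_s p : (p \in s) = (p \in E) by rewrite mem_sort mem_undup.
have size_s : size s <= 6 by rewrite size_sort (leq_trans (size_undup E)).
have s_sorted : sorted ltn (0 :: s).
  rewrite /= path_min_sorted.
    by rewrite ltn_sorted_uniq_leq sort_uniq undup_uniq sort_sorted //; apply: leq_total.
  by apply/allP => p; rewrite mem_s !inE; move: vx vy vz; rewrite /valid_band; lia.
pose g := relabel (spread s).
have lift w : w \in [:: x; y; z] -> exists2 w0, w0 \in bands6 & g w0 = w.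
  move=> w_xyz; have [vw [tE uE]] : valid_band n w /\ w.1 \in E /\ w.2 \in E.
    by move: w_xyz; rewrite !inE => /or3P [] /eqP ->; rewrite !eqxx ?orbT.
  case: w {w_xyz} vw tE uE => t u /andP[/andP[_ ut] _] /= tE uE.
  by apply: relabel_bands6; rewrite ?mem_s.
have /lift [x0 X0 gx] : x \in [:: x; y; z] by rewrite !inE eqxx.
have /lift [y0 Y0 gy] : y \in [:: x; y; z] by rewrite !inE eqxx orbT.
have /lift [z0 Z0 gz] : z \in [:: x; y; z] by rewrite !inE eqxx !orbT.
have g_mono := spread_mono s_sorted.
move: zx zy; rewrite -gx -gy -gz !(inj_eq (relabel_inj g_mono)) => /negPf zx /negPf zy.
rewrite /g cube_ok_map; last exact: bcompl_relabel; last exact: relabel_inj.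
move/allP/(_ x0 X0)/allP/(_ y0 Y0)/allP/(_ z0 Z0): cube_ok_bands6.
by rewrite zx zy !orFb; apply.
Qed.

Lemma cequiv_consK n x U V : cequiv n (x :: U) (x :: V) -> cequiv n U V.
Proof. exact: (cequiv_cons_cancel (@cube_cond_holds n)). Qed.

Lemma cequiv_catK n P U V : cequiv n (P ++ U) (P ++ V) -> cequiv n U V.
Proof. exact: (cequiv_cat_cancel (@cube_cond_holds n)). Qed.

Lemma pos_equiv_ctx n P Q u v :
  pos_equiv n u v -> pos_equiv n (P ++ u ++ Q) (P ++ v ++ Q).
Proof.
elim=> [x y [p q l r H] | x | x y _ H | x y z _ H1 _ H2].
- by apply: rst_step; have := bs_step (P ++ p) (q ++ Q) H; rewrite -!catA.
- exact: rst_refl.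
- exact: rst_sym.
- exact: rst_trans H2.
Qed.

Lemma pos_equiv_rel n l r : band_rel n l r -> pos_equiv n l r.
Proof. by move=> H; apply: rst_step; have := bs_step [::] [::] H; rewrite /= !cats0. Qed.

Lemma band_rel_comm n t s r q : valid_band n (t, s) -> valid_band n (r, q) ->
  q < r < s \/ s < q < r -> r < t ->
  band_rel n [:: (t, s); (r, q)] [:: (r, q); (t, s)].
Proof.
have factor_gt0 (a b : nat) : b < a -> (0 < a%:Z - b%:Z :> int)%R.
  by move=> ba; rewrite subr_gt0 ltz_nat.
move=> vts vrq H rt; apply: br_R1 => //.
case: H => [/andP[qr rs] | /andP[sq qr]].
  by rewrite !mulr_gt0 // factor_gt0 //; lia.
have factor_lt0 (a b : nat) : a < b -> (a%:Z - b%:Z < 0 :> int)%R.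
  by move=> ab; rewrite subr_lt0 ltz_nat.
rewrite -mulrA; apply: mulr_gt0.
  by apply: mulr_gt0; apply: factor_gt0; lia.
by rewrite nmulr_rgt0 ?factor_lt0 //; lia.
Qed.

Lemma pos_equiv_cross n t r s q : 0 < q -> q < s -> s < r -> r < t -> t <= n ->
  pos_equiv n [:: (t, s); (t, r); (s, q)] [:: (r, q); (t, q); (r, s)].
Proof.
move=> q0 qs sr rt tn.
have R1 : band_rel n [:: (t, r); (r, s)] [:: (t, s); (t, r)] by apply: br_R2a; lia.
have R2 : band_rel n [:: (r, s); (s, q)] [:: (r, q); (r, s)] by apply: br_R2a; lia.
have R3 : band_rel n [:: (t, r); (r, q)] [:: (r, q); (t, q)] by apply: br_R2c; lia.
apply: (rst_trans _ _ _ [:: (t, r); (r, s); (s, q)]).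
  exact/rst_sym/(pos_equiv_ctx [::] [:: (s, q)] (pos_equiv_rel R1)).
apply: (rst_trans _ _ _ [:: (t, r); (r, q); (r, s)]).
  exact: (pos_equiv_ctx [:: (t, r)] [::] (pos_equiv_rel R2)).
exact: (pos_equiv_ctx [::] [:: (r, s)] (pos_equiv_rel R3)).
Qed.

Lemma pos_equiv_compl n a b : a != b -> valid_band n a -> valid_band n b ->
  pos_equiv n (a :: bcompl a b) (b :: bcompl b a).
Proof.
wlog ba : a b / (b.1 < a.1) || (b.1 == a.1) && (b.2 < a.2).
  move=> gen ab va vb.
  case: (boolP ((b.1 < a.1) || (b.1 == a.1) && (b.2 < a.2))) => [ba | nba].
    exact: gen.
  apply/rst_sym/gen => //; last by rewrite eq_sym.
  by move: ab nba; case: a {va} b {vb} => [t s] [r q]; rewrite xpair_eqE /=; lia.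
case: a b ba => t s [r q] ba ab va vb; rewrite /= in ba.
have /andP[/andP[s0 st] tn] : (0 < s < t) && (t <= n) := va.
have /andP[/andP[q0 qr] rn] : (0 < q < r) && (r <= n) := vb.
have [rt | tr] : r < t \/ r = t by lia.
  have [sq | sq] := eqVneq s q; first subst q.
    have -> : bcompl (t, s) (r, s) = [:: (t, r)] by bcompl_cases.
    have -> : bcompl (r, s) (t, s) = [:: (t, s)] by bcompl_cases.
    exact/pos_equiv_rel/br_R2b.
  have [sr | sr] := eqVneq s r; first subst s.
    have -> : bcompl (t, r) (r, q) = [:: (r, q)] by bcompl_cases.
    have -> : bcompl (r, q) (t, r) = [:: (t, q)] by bcompl_cases.
    exact/pos_equiv_rel/br_R2c.
  have [/andP[sr' qs] | ncross] := boolP ((s < r) && (q < s)).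
    have -> : bcompl (t, s) (r, q) = [:: (t, r); (s, q)] by bcompl_cases.
    have -> : bcompl (r, q) (t, s) = [:: (t, q); (r, s)] by bcompl_cases.
    exact: pos_equiv_cross.
  have -> : bcompl (t, s) (r, q) = [:: (r, q)] by bcompl_cases.
  have -> : bcompl (r, q) (t, s) = [:: (t, s)] by bcompl_cases.
  by apply/pos_equiv_rel/band_rel_comm => //; lia.
subst r; have -> : bcompl (t, s) (t, q) = [:: (s, q)] by bcompl_cases.
have -> : bcompl (t, q) (t, s) = [:: (t, s)] by bcompl_cases.
by apply/pos_equiv_rel/br_R2a; lia.
Qed.

Lemma cequiv_pos_equiv n u v : cequiv n u v -> pos_equiv n u v.
Proof.
elim=> [x y [p [q [a [b [ab va vb -> ->]]]]] | x | x y z _ H1 _ H2].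
- exact: (pos_equiv_ctx p q (pos_equiv_compl ab va vb)).
- exact: rst_refl.
- exact: rst_trans H2.
Qed.

Definition sigma i : nat * nat := (i.+1, i).

Definition sigmas j k : bword := [seq sigma i | i <- rev (iota j (k - j))].

Definition delta n := sigmas 1 n.

Definition wpow (W : bword) k := flatten (nseq k W).

Lemma wpowS W k : wpow W k.+1 = W ++ wpow W k.
Proof. by []. Qed.

Lemma wpowD W a b : wpow W a ++ wpow W b = wpow W (a + b).
Proof. by elim: a => //= a IH; rewrite -catA IH. Qed.

Lemma wpowSr W k : wpow W k.+1 = wpow W k ++ W.
Proof. by rewrite -addn1 -wpowD /wpow /= cats0. Qed.

Lemma wpow_valid n W k : valid_bword n W -> valid_bword n (wpow W k).
Proof. by move=> vW; elim: k => //= k IH; rewrite valid_bword_cat vW. Qed.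

Lemma sigmas_split j m k : j <= m <= k -> sigmas j k = sigmas m k ++ sigmas j m.
Proof.
move=> /andP[jm mk]; rewrite /sigmas -map_cat -rev_cat.
have -> : k - j = (m - j) + (k - m) by lia.
by rewrite iotaD; congr (map _ (rev (_ ++ iota _ _))); lia.
Qed.

Lemma sigmasS j k : j <= k -> sigmas j k.+1 = sigma k :: sigmas j k.
Proof.
by move=> jk; rewrite (@sigmas_split j k k.+1) ?jk ?leqnSn // {1}/sigmas subSnn.
Qed.

Lemma sigmas_rcons j k : j < k -> sigmas j k = sigmas j.+1 k ++ [:: sigma j].
Proof.
by move=> jk; rewrite (@sigmas_split j j.+1 k) ?jk ?leqnSn // /sigmas subSnn.
Qed.

Lemma sigmasxx j : sigmas j j = [::].
Proof. by rewrite /sigmas subnn. Qed.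

Lemma mem_sigmas y j k : y \in sigmas j k -> exists2 i, j <= i < k & y = sigma i.
Proof. by case/mapP=> i; rewrite mem_rev mem_iota => H ->; exists i => //; lia. Qed.

Lemma sigmas_valid n j k : 0 < j -> k <= n -> valid_bword n (sigmas j k).
Proof.
by move=> j0 kn; apply/allP => y /mem_sigmas [i Hi ->]; rewrite /valid_band /=; lia.
Qed.

Lemma delta_def n : 1 < n -> delta n = sigma n.-1 :: sigmas 1 n.-1.
Proof. by move=> n1; rewrite /delta -{1}(prednK (ltnW n1)) sigmasS //; lia. Qed.

Lemma cequiv_compl_eq n a b u v : a != b -> valid_band n a -> valid_band n b ->
  bcompl a b = u -> bcompl b a = v -> cequiv n (a :: u) (b :: v).
Proof. by move=> ab va vb <- <-; apply: cequiv_compl. Qed.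

Ltac cequiv_by_compl :=
  apply: cequiv_compl_eq; rewrite ?xpair_eqE ?/valid_band /=; try bcompl_cases.

Lemma cequiv_R2a n t s r : 0 < r -> r < s -> s < t -> t <= n ->
  cequiv n [:: (t, s); (s, r)] [:: (t, r); (t, s)].
Proof. by move=> *; cequiv_by_compl. Qed.

Lemma cequiv_R2c n t s r : 0 < r -> r < s -> s < t -> t <= n ->
  cequiv n [:: (t, s); (s, r)] [:: (s, r); (t, r)].
Proof. by move=> *; cequiv_by_compl. Qed.

Lemma sigma_comm n i j : 0 < i -> i.+1 < j -> j < n ->
  cequiv n [:: sigma i; sigma j] [:: sigma j; sigma i].
Proof. by move=> *; cequiv_by_compl. Qed.

Lemma sigmas_band_head n j k : 0 < j -> j < k -> k <= n ->
  cequiv n (sigmas j k) ((k, j) :: sigmas j.+1 k).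
Proof.
move=> j0; elim: k => // k IH jk kn.
rewrite sigmasS ?(ltnW jk) //.
have [<- | jk'] : j = k \/ j < k by lia.
  by rewrite !sigmasxx; apply: cequiv_refl.
rewrite sigmasS //.
apply: cequiv_trans (cequiv_cons _ (IH jk' (ltnW kn))) _.
exact: (cequiv_catr _ (cequiv_R2a j0 jk' (ltnSn k) kn)).
Qed.

Lemma sigmas_band_last n j k : 0 < j -> j < k -> k <= n ->
  cequiv n (sigmas j k) (sigmas j k.-1 ++ [:: (k, j)]).
Proof.
move=> j0 jk kn; have [m Hm] : exists m, k - j.+1 = m by eexists.
elim: m j Hm j0 jk => [|m IH] j Hm j0 jk.
  have -> : k = j.+1 by lia.
  by rewrite sigmasS // sigmasxx; apply: cequiv_refl.
rewrite sigmas_rcons // (@sigmas_rcons j k.-1); last by lia.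
apply: (@cequiv_trans _ _ ((sigmas j.+1 k.-1 ++ [:: (k, j.+1)]) ++ [:: sigma j])).
  by apply/cequiv_catr/IH; lia.
by rewrite -!catA; apply: cequiv_catl; apply: cequiv_R2c; lia.
Qed.

Lemma cequiv_cons_rot n x W : (forall y, y \in W -> cequiv n [:: x; y] [:: y; x]) ->
  cequiv n (x :: W) (W ++ [:: x]).
Proof.
elim: W => [|y W IH] H /=; first exact: cequiv_refl.
apply: (@cequiv_trans _ _ (y :: x :: W)).
  exact: (cequiv_catr W (H y (mem_head _ _))).
by apply/cequiv_cons/IH => z zW; apply: H; rewrite inE zW orbT.
Qed.

Lemma sigma_braid n k : 0 < k -> k.+2 <= n ->
  cequiv n [:: sigma k; sigma k.+1; sigma k] [:: sigma k.+1; sigma k; sigma k.+1].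
Proof.
move=> k0 kn; apply: (@cequiv_trans _ _ [:: (k.+1, k); (k.+2, k); (k.+2, k.+1)]).
  exact/cequiv_cons/cequiv_R2a.
exact: (cequiv_catr [:: (k.+2, k.+1)] (cequiv_sym (cequiv_R2c k0 (ltnSn k) (ltnSn _) kn))).
Qed.

(* [delta_conj n a] is the conjugate delta^-1 a delta. *)
Definition delta_conj n (a : nat * nat) :=
  if a.1 < n then (a.1.+1, a.2.+1) else (a.2.+1, 1).

Lemma delta_conj_valid n a : 1 < n -> valid_band n a -> valid_band n (delta_conj n a).
Proof. by case: a => t s n1; rewrite /delta_conj /valid_band /=; case: ifP => /=; lia. Qed.

Lemma sigma_delta n k : 0 < k -> k.+2 <= n ->
  cequiv n (sigma k :: delta n) (delta n ++ [:: sigma k.+1]).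
Proof.
move=> k0 kn.
have -> : delta n = sigmas k.+2 n ++ [:: sigma k.+1; sigma k] ++ sigmas 1 k.
  by rewrite /delta (@sigmas_split 1 k.+2 n) ?sigmasS //; lia.
apply: (@cequiv_trans _ _ ((sigmas k.+2 n ++ [:: sigma k]) ++
                            [:: sigma k.+1; sigma k] ++ sigmas 1 k)).
  rewrite -cat_cons; apply/cequiv_catr/cequiv_cons_rot => y /mem_sigmas [i Hi ->].
  by apply: sigma_comm; lia.
rewrite -!catA /=; apply: cequiv_catl.
apply: (@cequiv_trans _ _ ([:: sigma k.+1; sigma k; sigma k.+1] ++ sigmas 1 k)).
  exact: (cequiv_catr _ (sigma_braid k0 kn)).
apply/cequiv_cons/cequiv_cons/cequiv_cons_rot => y /mem_sigmas [i Hi ->].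
by apply/cequiv_sym/sigma_comm; lia.
Qed.

Lemma sigma_last_delta n : 1 < n ->
  cequiv n (sigma n.-1 :: delta n) (delta n ++ [:: (n, 1)]).
Proof.
move=> n1; rewrite {2}delta_def //=; apply: cequiv_cons.
exact: (sigmas_band_last (ltn0Sn 0) n1 (leqnn n)).
Qed.

Lemma sigma_delta_conj n s : 1 < n -> 0 < s -> s < n ->
  cequiv n (sigma s :: delta n) (delta n ++ [:: delta_conj n (sigma s)]).
Proof.
move=> n1 s0 sn; rewrite /delta_conj /=; case: ifP => sn'; first exact: sigma_delta.
have -> : s = n.-1 by lia.
by rewrite prednK; [apply: sigma_last_delta | lia].
Qed.

Lemma delta_conj_R2c n t s : 0 < s -> s.+1 < t -> t <= n ->
  cequiv n [:: delta_conj n (t, t.-1); delta_conj n (t.-1, s)]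
           [:: delta_conj n (t.-1, s); delta_conj n (t, s)].
Proof.
move=> s0 st tn; rewrite /delta_conj /=.
have -> : t.-1 < n by lia.
have -> : t.-1.+1 = t by lia.
case: ifP => tn'; first by apply: cequiv_R2c; lia.
have -> : t = n by lia.
by apply/cequiv_sym/cequiv_R2a; lia.
Qed.

(* Induction on t - s: a_(t-1,s) a_(t,s) = a_(t,t-1) a_(t-1,s), and the
   common left factor a_(t-1,s) is cancelled. *)
Lemma band_delta n a : 1 < n -> valid_band n a ->
  cequiv n (a :: delta n) (delta n ++ [:: delta_conj n a]).
Proof.
case: a => t s n1 va; have /andP[/andP[s0 st] tn] : (0 < s < t) && (t <= n) := va.
clear va; have [d Ed] : exists d, t = s + d.+1 by exists (t - s.+1); lia.
elim: d t Ed st tn => [|d IH] t Ed st tn.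
  by rewrite Ed addn1; apply: sigma_delta_conj => //; lia.
pose a := (t.-1, s); pose b := (t, s); pose c := (t, t.-1).
have Ha : cequiv n (a :: delta n) (delta n ++ [:: delta_conj n a]).
  by apply: IH; lia.
have Hc : cequiv n (c :: delta n) (delta n ++ [:: delta_conj n c]).
  have -> : c = sigma t.-1 by rewrite /c /sigma prednK //; lia.
  by apply: sigma_delta_conj => //; lia.
have R : cequiv n [:: a; b] [:: c; a] by apply/cequiv_sym/cequiv_R2c; lia.
apply: (@cequiv_consK n a).
apply: (@cequiv_trans _ _ (c :: a :: delta n)); first exact: (cequiv_catr _ R).
apply: (@cequiv_trans _ _ (c :: delta n ++ [:: delta_conj n a])).
  exact: cequiv_cons.
apply: (@cequiv_trans _ _ ((delta n ++ [:: delta_conj n c]) ++ [:: delta_conj n a])).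
  exact: (cequiv_catr _ Hc).
apply: (@cequiv_trans _ _ ((delta n ++ [:: delta_conj n a]) ++ [:: delta_conj n b])).
  by rewrite -!catA; apply/cequiv_catl/delta_conj_R2c; lia.
exact: (cequiv_catr _ (cequiv_sym Ha)).
Qed.

Lemma bword_delta n W : 1 < n -> valid_bword n W ->
  cequiv n (W ++ delta n) (delta n ++ map (delta_conj n) W).
Proof.
move=> n1; elim: W => [_ | a W IH /andP[va vW]]; first by rewrite cats0; apply: cequiv_refl.
apply: (@cequiv_trans _ _ (a :: delta n ++ map (delta_conj n) W)).
  exact: cequiv_cons (IH vW).
by rewrite map_cons -[_ :: map _ _]cat1s catA; apply: (cequiv_catr _ (band_delta n1 va)).
Qed.

Lemma bword_delta_pow n j W : 1 < n -> valid_bword n W ->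
  cequiv n (W ++ wpow (delta n) j) (wpow (delta n) j ++ map (iter j (delta_conj n)) W).
Proof.
move=> n1; elim: j W => [|j IH] W vW.
  by rewrite /= cats0 map_id; apply: cequiv_refl.
have vW' : valid_bword n (map (delta_conj n) W).
  by apply/allP => _ /mapP [a /(allP vW) va ->]; apply: delta_conj_valid.
rewrite wpowS catA.
apply: (@cequiv_trans _ _ ((delta n ++ map (delta_conj n) W) ++ wpow (delta n) j)).
  exact/cequiv_catr/bword_delta.
rewrite -!catA; apply/cequiv_catl; apply: cequiv_trans (IH _ vW') _.
by rewrite -map_comp (eq_map (fun a => esym (iterSr j (delta_conj n) a))); apply: cequiv_refl.
Qed.

Lemma delta_conj_iter n k t s : t + k <= n -> iter k (delta_conj n) (t, s) = (t + k, s + k).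
Proof.
elim: k => [|k IH] tk; first by rewrite !addn0.
by rewrite iterS IH; [rewrite /delta_conj /= ifT ?addnS //; lia | lia].
Qed.

(* [delta_conj n] rotates the n points of the disc, so it has period n. *)
Lemma delta_conj_period n a : valid_band n a -> iter n (delta_conj n) a = a.
Proof.
case: a => t s va; have /andP[/andP[s0 st] tn] : (0 < s < t) && (t <= n) := va.
have wrap k : k < n -> delta_conj n (n, k) = (k.+1, 1) by rewrite /delta_conj ltnn.
have S1 : iter (n - t) (delta_conj n) (t, s) = (n, s + (n - t)).
  by rewrite delta_conj_iter; [congr pair; lia | lia].
have S2 : iter (t - s.+1) (delta_conj n) ((s + (n - t)).+1, 1) = (n, t - s).
  by rewrite delta_conj_iter; [congr pair; lia | lia].
have S3 : iter s.-1 (delta_conj n) ((t - s).+1, 1) = (t, s).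
  by rewrite delta_conj_iter; [congr pair; lia | lia].
have En : n = s.-1 + (1 + (t - s.+1 + (1 + (n - t)))) by lia.
by rewrite {1}En !iterD /= S1 wrap ?S2 ?wrap ?S3 //; lia.
Qed.

Definition twist n := wpow (delta n) n.

Lemma delta_valid n : valid_bword n (delta n).
Proof. exact: sigmas_valid. Qed.

Lemma twist_central n W : 1 < n -> valid_bword n W ->
  cequiv n (W ++ twist n) (twist n ++ W).
Proof.
move=> n1 vW; have := bword_delta_pow n n1 vW.
by rewrite (@map_id_in _ _ W) // => a /(allP vW) /delta_conj_period.
Qed.

Lemma twist_pow_central n W k : 1 < n -> valid_bword n W ->
  cequiv n (W ++ wpow (twist n) k) (wpow (twist n) k ++ W).
Proof.
move=> n1 vW; elim: k => [|k IH]; first by rewrite /= cats0; apply: cequiv_refl.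
rewrite wpowS catA; apply: cequiv_trans (cequiv_catr _ (twist_central n1 vW)) _.
by rewrite -!catA; apply: cequiv_catl.
Qed.

Definition sigma_cofactor n i :=
  wpow (delta n) (n.-1 - i) ++ sigmas 1 n.-1 ++ wpow (delta n) i.

Lemma sigma_cofactor_valid n i : valid_bword n (sigma_cofactor n i).
Proof.
by rewrite /sigma_cofactor !valid_bword_cat !wpow_valid ?delta_valid ?sigmas_valid //; lia.
Qed.

Lemma sigma_mul_cofactor n i : 1 < n -> 0 < i -> i < n ->
  cequiv n (sigma i :: sigma_cofactor n i) (twist n).
Proof.
move=> n1 i0 iN.
have vs : valid_bword n [:: sigma i] by rewrite /= andbT /valid_band /=; lia.
have := bword_delta_pow (n.-1 - i) n1 vs.
rewrite /= /sigma delta_conj_iter; last lia.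
have -> : (i.+1 + (n.-1 - i), i + (n.-1 - i)) = sigma n.-1 by rewrite /sigma; congr pair; lia.
move=> H; rewrite /sigma_cofactor -cat_cons; apply: cequiv_trans (cequiv_catr _ H) _.
rewrite -catA cat1s -cat_cons -delta_def // -wpowS wpowD.
have -> : n.-1 - i + i.+1 = n by lia.
exact: cequiv_refl.
Qed.

Lemma cofactor_mul_sigma n i : 1 < n -> 0 < i -> i < n ->
  cequiv n (sigma_cofactor n i ++ [:: sigma i]) (twist n).
Proof.
move=> n1 i0 iN; apply: (@cequiv_consK n (sigma i)).
have vs : valid_bword n [:: sigma i] by rewrite /= andbT /valid_band /=; lia.
rewrite -cat_cons; apply: cequiv_trans (cequiv_catr _ (sigma_mul_cofactor n1 i0 iN)) _.
exact: cequiv_sym (twist_central n1 vs).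
Qed.

(* A pair [(P, k)] stands for [P * twist n ^ -k]; as [twist n] is central,
   these fractions model B_n inside the group of fractions of B_n^+. *)
Section Fractions.
Variable n : nat.

Local Notation D := (twist n).

(* Letters with an index outside [1, n) are sent to the identity. *)
Definition letter_frac (l : nat * bool) : bword * nat :=
  if 0 < l.1 < n then (if l.2 then ([:: sigma l.1], 0) else (sigma_cofactor n l.1, 1))
  else ([::], 0).

Definition artin_frac (w : aword) : bword * nat :=
  (flatten [seq (letter_frac l).1 | l <- w], sumn [seq (letter_frac l).2 | l <- w]).

Definition frac_mul (x y : bword * nat) := (x.1 ++ y.1, x.2 + y.2).

Definition frac_eq (x y : bword * nat) :=
  exists j, cequiv n (x.1 ++ wpow D (j + y.2)) (y.1 ++ wpow D (j + x.2)).

Lemma artin_frac_cat u v : artin_frac (u ++ v) = frac_mul (artin_frac u) (artin_frac v).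
Proof. by rewrite /artin_frac /frac_mul !map_cat flatten_cat sumn_cat. Qed.

Lemma artin_frac_valid w : valid_bword n (artin_frac w).1.
Proof.
elim: w => //= l w IH; rewrite valid_bword_cat IH andbT /letter_frac.
case: ifP => // /andP[l0 ln]; case: l.2; last exact: sigma_cofactor_valid.
by rewrite /= andbT /valid_band /=; lia.
Qed.

Lemma cequiv_wpow_catl X a b : a = b -> cequiv n (X ++ wpow D a) (X ++ wpow D b).
Proof. by move=> ->; apply: cequiv_refl. Qed.

Lemma frac_eq_refl x : frac_eq x x.
Proof. by exists 0; apply: cequiv_refl. Qed.

Lemma frac_eq_sym x y : frac_eq x y -> frac_eq y x.
Proof. by move=> [j H]; exists j; apply: cequiv_sym. Qed.

Lemma frac_eq_trans x y z : frac_eq x y -> frac_eq y z -> frac_eq x z.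
Proof.
case: x y z => [P k] [Q l] [R r] [j1 /= H1] [j2 /= H2].
exists (j1 + j2 + l) => /=.
apply: (@cequiv_trans _ _ ((P ++ wpow D (j1 + l)) ++ wpow D (j2 + r))).
  by rewrite -catA wpowD; apply: cequiv_wpow_catl; lia.
apply: (@cequiv_trans _ _ ((Q ++ wpow D (j1 + k)) ++ wpow D (j2 + r))).
  exact: cequiv_catr.
apply: (@cequiv_trans _ _ ((Q ++ wpow D (j2 + r)) ++ wpow D (j1 + k))).
  by rewrite -!catA !wpowD; apply: cequiv_wpow_catl; lia.
apply: (@cequiv_trans _ _ ((R ++ wpow D (j2 + l)) ++ wpow D (j1 + k))).
  exact: cequiv_catr.
by rewrite -catA wpowD; apply: cequiv_wpow_catl; lia.
Qed.

Lemma frac_eq_mull x y y' : frac_eq y y' -> frac_eq (frac_mul x y) (frac_mul x y').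
Proof.
case: x y y' => [P k] [Q l] [Q' l'] [j /= H]; exists j => /=.
have split_pow m : wpow D (j + (k + m)) = wpow D (j + m) ++ wpow D k.
  by rewrite wpowD; congr wpow; lia.
by rewrite !split_pow -!catA; apply: cequiv_catl; rewrite !catA; apply: cequiv_catr.
Qed.

Lemma cequiv_frac_eq P Q : cequiv n P Q -> frac_eq (P, 0) (Q, 0).
Proof. by move=> H; exists 0; rewrite /= !cats0. Qed.

Hypothesis n_gt1 : 1 < n.

Lemma frac_eq_mulr x x' y : valid_bword n y.1 -> frac_eq x x' ->
  frac_eq (frac_mul x y) (frac_mul x' y).
Proof.
case: x x' y => [P k] [P' k'] [Q l] /= vQ [j /= H]; exists j => /=.
have split_pow m : wpow D (j + (m + l)) = wpow D (j + m) ++ wpow D l.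
  by rewrite wpowD addnA.
rewrite -!catA !split_pow !catA.
apply: (@cequiv_trans _ _ ((P ++ wpow D (j + k')) ++ Q ++ wpow D l)).
  by rewrite -!catA; apply/cequiv_catl; rewrite !catA; apply/cequiv_catr/twist_pow_central.
apply: (@cequiv_trans _ _ ((P' ++ wpow D (j + k)) ++ Q ++ wpow D l)).
  exact: cequiv_catr.
rewrite -!catA; apply/cequiv_catl; rewrite !catA; apply/cequiv_catr.
exact: cequiv_sym (twist_pow_central _ n_gt1 vQ).
Qed.

Lemma artin_rel_frac_eq l r : artin_rel n l r -> frac_eq (artin_frac l) (artin_frac r).
Proof.
case=> [i b i1 iN | i j i1 ij jN | i i1 iN]; rewrite /artin_frac /letter_frac /=.
- have -> : (0 < i < n) = true by lia.
  case: b => /=; exists 0; rewrite /= /wpow /= !cats0.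
    exact: sigma_mul_cofactor.
  exact: cofactor_mul_sigma.
- have -> : (0 < i < n) = true by lia.
  have -> : (0 < j < n) = true by lia.
  by apply/cequiv_frac_eq/sigma_comm.
- have -> : (0 < i < n) = true by lia.
  by rewrite iN; apply/cequiv_frac_eq/sigma_braid.
Qed.

Lemma braid_eq_frac_eq u v : braid_eq n u v -> frac_eq (artin_frac u) (artin_frac v).
Proof.
elim=> [_ _ [p q l r H] | x | x y _ H | x y z _ H1 _ H2].
- rewrite !artin_frac_cat; apply: frac_eq_mull.
  exact: frac_eq_mulr (artin_frac_valid _) (artin_rel_frac_eq H).
- exact: frac_eq_refl.
- exact: frac_eq_sym.
- exact: frac_eq_trans H1 H2.
Qed.

Lemma sigmas_cofactors j t : 0 < j -> j <= t -> t <= n ->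
  cequiv n (sigmas j t ++ flatten [seq sigma_cofactor n k | k <- iota j (t - j)])
           (wpow D (t - j)).
Proof.
move=> j0 jt tn; have [m Em] : exists m, t - j = m by eexists.
elim: m j Em j0 jt => [|m IH] j Em j0 jt.
  have -> : t = j by lia.
  by rewrite sigmasxx subnn; apply: cequiv_refl.
have jt' : j < t by lia.
rewrite Em -Em (sigmas_rcons jt') (_ : t - j = (t - j.+1).+1); last lia.
rewrite [iota _ _]/= map_cons [flatten _]/= -catA cat1s.
set F := flatten _.
apply: (@cequiv_trans _ _ (sigmas j.+1 t ++ D ++ F)).
  by apply/cequiv_catl; rewrite -cat_cons; apply/cequiv_catr/sigma_mul_cofactor; lia.
apply: (@cequiv_trans _ _ ((sigmas j.+1 t ++ F) ++ D)).
  rewrite -catA; apply/cequiv_catl/cequiv_sym/twist_central => //.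
  by apply/allP => y /flatten_mapP [k _ /(allP (sigma_cofactor_valid n k))].
by rewrite wpowSr; apply/cequiv_catr/IH; lia.
Qed.

Lemma artin_frac_pos ks : all (fun k => 0 < k < n) ks ->
  artin_frac [seq (k, true) | k <- ks] = ([seq sigma k | k <- ks], 0).
Proof.
elim: ks => //= k ks IH /andP[hk hks].
by rewrite -[_ :: map _ _]cat1s artin_frac_cat IH // /artin_frac /letter_frac /= hk.
Qed.

Lemma artin_frac_neg ks : all (fun k => 0 < k < n) ks ->
  artin_frac [seq (k, false) | k <- ks] =
    (flatten [seq sigma_cofactor n k | k <- ks], size ks).
Proof.
elim: ks => //= k ks IH /andP[hk hks].
by rewrite -[_ :: map _ _]cat1s artin_frac_cat IH // /artin_frac /letter_frac /= hk cats0.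
Qed.

Lemma artin_frac_band t s : valid_band n (t, s) ->
  frac_eq (artin_frac (band_artin t s)) ([:: (t, s)], 0).
Proof.
move=> vts; have /andP[/andP[s0 st] tn] : (0 < s < t) && (t <= n) := vts.
rewrite /band_artin; have -> : t.-1 - s = t - s.+1 by lia.
have range : all (fun k => 0 < k < n) (iota s.+1 (t - s.+1)).
  by apply/allP => k; rewrite mem_iota; lia.
rewrite !artin_frac_cat artin_frac_pos ?all_rev // artin_frac_neg //.
have -> : artin_frac [:: (s, true)] = ([:: sigma s], 0).
  by rewrite /artin_frac /letter_frac /=; have -> : (0 < s < n) = true by lia.
rewrite /frac_mul /= size_iota; exists 0 => /=.
rewrite !add0n (_ : wpow D 0 = [::]) // cats0 -[sigma s :: _]cat1s catA.
have -> : [seq sigma k | k <- rev (iota s.+1 (t - s.+1))] ++ [:: sigma s] = sigmas s t.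
  by rewrite (sigmas_rcons st).
apply: (@cequiv_trans _ _ (((t, s) :: sigmas s.+1 t) ++
    flatten [seq sigma_cofactor n k | k <- iota s.+1 (t - s.+1)])).
  exact: (cequiv_catr _ (sigmas_band_head s0 st tn)).
exact: (cequiv_cons _ (sigmas_cofactors (ltn0Sn s) st tn)).
Qed.

Lemma artin_frac_bword u : valid_bword n u -> frac_eq (artin_frac (bword_to_artin u)) (u, 0).
Proof.
elim: u => [_ | [t s] u IH /andP[vts vu]]; first exact: frac_eq_refl.
rewrite /bword_to_artin /= -/(bword_to_artin u) artin_frac_cat.
apply: (@frac_eq_trans _ (frac_mul ([:: (t, s)], 0) (artin_frac (bword_to_artin u)))).
  exact: frac_eq_mulr (artin_frac_valid _) (artin_frac_band vts).
exact: (frac_eq_mull ([:: (t, s)], 0) (IH vu)).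
Qed.

Lemma frac_eq_cequiv u v : valid_bword n u -> valid_bword n v ->
  frac_eq (u, 0) (v, 0) -> cequiv n u v.
Proof.
move=> vu vv [j /=]; rewrite addn0 => Hj.
apply: (@cequiv_catK n (wpow D j)).
apply: cequiv_trans (cequiv_sym (twist_pow_central _ n_gt1 vu)) _.
exact: cequiv_trans Hj (twist_pow_central _ n_gt1 vv).
Qed.

End Fractions.

Lemma valid_bword_nil n w : n <= 1 -> valid_bword n w -> w = [::].
Proof. by case: w => // -[t s] w n1 /andP[/andP[/andP[s0 st] tn] _]; lia. Qed.

Theorem theorem2p6 (n : nat) (u v : bword) :
  valid_bword n u -> valid_bword n v ->
  braid_eq n (bword_to_artin u) (bword_to_artin v) ->
  pos_equiv n u v.
Proof.
move=> vu vv uv; have [n_le1 | n_gt1] := leqP n 1.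
  by rewrite (valid_bword_nil n_le1 vu) (valid_bword_nil n_le1 vv); apply: rst_refl.
apply/cequiv_pos_equiv/(frac_eq_cequiv n_gt1 vu vv).
apply: frac_eq_trans (frac_eq_sym (artin_frac_bword n_gt1 vu)) _.
exact: frac_eq_trans (braid_eq_frac_eq n_gt1 uv) (artin_frac_bword n_gt1 vv).
Qed.
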